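(* Let $I$ be a compact, connected and locally connected topological space and $h:I\to\mathbb{R}$ a positive continuous function attaining its lower bound at $v\in I$. Let $(\tilde I,\tilde d)$ be the quotient metric space of $I$ under the pseudo-metric $d(y,z)=h(y)+h(z)-2\lambda(y,z)$, where $\lambda(y,z)=\sup\{\lambda : C_{y,\lambda}=C_{z,\lambda},\ \lambda\le h(y),\ \lambda\le h(z)\}$. Then $(\tilde I,\tilde d)$ is a compact metric space.
   Context: For $x\in I$ and $\lambda\le h(x)$, $C_{x,\lambda}$ denotes the maximal connected subset of $\{y\in I: h(y)\ge\lambda\}$ containing $x$. The quotient $\tilde I$ is obtained by identifying $x$ and $y$ whenever $d(x,y)=0$; $\tilde d$ is the metric on $\tilde I$ induced by $d$. *)

From HB Require Import structures.
From mathcomp Require Import all_boot all_order all_algebra.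
From mathcomp Require Import all_classical all_reals all_analysis.
Set Implicit Arguments. Unset Strict Implicit. Unset Printing Implicit Defensive.
Import Order.TTheory GRing.Theory Num.Theory numFieldTopology.Exports.
Local Open Scope classical_set_scope.
Local Open Scope ring_scope.

Definition locally_connected (T : topologicalType) : Prop :=
  forall (x : T) (U : set T), nbhs x U ->
    exists V : set T, [/\ open V, connected V, V x & V `<=` U].

Section Tree.
Context {T : topologicalType} {R : realType}.

Definition Ccomp (h : T -> R) (x : T) (l : R) : set T :=
  connected_component [set y | l <= h y] x.

Definition lam (h : T -> R) (y z : T) : R :=
  sup [set l : R | [/\ Ccomp h y l = Ccomp h z l, l <= h y & l <= h z]].

Definition pd (h : T -> R) (y z : T) : R := h y + h z - 2 * lam h y z.

Definition quot (h : T -> R) : Type :=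
  {A : set T | exists x : T, A = [set y | pd h x y = 0]}.

Definition qrep (h : T -> R) (A : quot h) : T := projT1 (cid (proj2_sig A)).

Definition qdist (h : T -> R) (A B : quot h) : R := pd h (qrep A) (qrep B).
End Tree.

Definition is_metric {R : realType} (Q : Type) (dist : Q -> Q -> R) : Prop :=
  forall a b c : Q,
    [/\ 0 <= dist a b, dist a b = 0 <-> a = b, dist a b = dist b a
      & dist a c <= dist a b + dist b c].

Definition dopen {R : realType} (Q : Type) (dist : Q -> Q -> R) (U : set Q) :=
  forall q, U q -> exists e : R, 0 < e /\ forall q', dist q q' < e -> U q'.

Definition metric_compact {R : realType} (Q : Type) (dist : Q -> Q -> R) : Prop :=
  forall (J : Type) (U : J -> set Q),
    (forall j, dopen dist (U j)) -> (forall q, exists j, U j q) ->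
    exists F : set J, finite_set F /\ forall q, exists2 j, F j & U j q.

From HB Require Import structures.
From mathcomp Require Import all_boot all_order all_algebra.
From mathcomp Require Import all_classical all_reals all_analysis.
From mathcomp Require Import finmap lra.
Set Implicit Arguments. Unset Strict Implicit. Unset Printing Implicit Defensive.
Import Order.TTheory GRing.Theory Num.Theory numFieldTopology.Exports.
Local Open Scope classical_set_scope.
Local Open Scope ring_scope.

(* The levels l at which y and z lie in a common component of {h >= l} form
   a down-closed set containing min h (I is connected), and lying in a common
   component is transitive; hence lambda satisfies the ultrametric inequality
   lambda(y,w) >= min (lambda(y,z), lambda(z,w)).  As lambda(y,z) and
   lambda(z,w) are at most h(z), this is exactly the triangle inequality for d.
   Compactness of the quotient is inherited from I because the quotient map is
   continuous: a connected neighbourhood of x on which |h - h(x)| < e lies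
   inside C_{x, h(x) - e}, so each of its points y has d(x,y) < 3e. *)

(* [compact_cover] is stated for pointed spaces; a point of T is only needed
   to transport it. *)
Definition pointed_at (T : topologicalType) (x0 : T) : Type := T.
HB.instance Definition _ (T : topologicalType) (x0 : T) :=
  Topological.copy (pointed_at x0) T.
HB.instance Definition _ (T : topologicalType) (x0 : T) :=
  isPointed.Build (pointed_at x0) x0.

Lemma compact_cover_compact (T : topologicalType) (x0 : T) (A : set T) :
  compact A -> cover_compact A.
Proof.
by rewrite -[compact A]/(compact (A : set (pointed_at x0))) compact_cover.
Qed.

Section Levels.
Context {R : realType} {I : topologicalType} (h : I -> R) (v : I).
Hypothesis Icon : connected [set: I].
Hypothesis hmin : forall x, h v <= h x.

Definition lam_set (y z : I) : set R :=
  [set l | [/\ Ccomp h y l = Ccomp h z l, l <= h y & l <= h z]].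

Lemma lamE y z : lam h y z = sup (lam_set y z). Proof. by []. Qed.

Lemma lam_setE y z l : lam_set y z l <-> l <= h y /\ Ccomp h y l z.
Proof.
split.
  by case=> e ly lz; split => //; rewrite e; exact: connected_component_refl.
case=> ly yz; have lz : l <= h z by have := connected_component_sub yz.
split => //; apply/seteqP; split => w.
  by apply: connected_component_trans; apply: connected_component_sym.
exact: connected_component_trans.
Qed.

Lemma lam_set_sym y z : lam_set y z = lam_set z y.
Proof. by apply/seteqP; split => l [e a b]; split. Qed.

Lemma lam_set_trans y z w l : lam_set y z l -> lam_set z w l -> lam_set y w l.
Proof. by case=> e1 a1 b1 [e2 a2 b2]; split => //; rewrite e1. Qed.

Lemma lam_set_le y z l l' : lam_set y z l -> l' <= l -> lam_set y z l'.
Proof.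
move=> /lam_setE [ly [B [By BA Bc Bz]]] l'l; apply/lam_setE.
split; first exact: le_trans ly.
exists B => //; split => // w /BA /=; exact: le_trans.
Qed.

Lemma lam_set_min y z : lam_set y z (h v).
Proof.
apply/lam_setE; split => //; rewrite /Ccomp.
have -> : [set w | h v <= h w] = setT.
  by apply/seteqP; split => // w _; exact: hmin.
by rewrite connected_component_id.
Qed.

Lemma has_sup_lam_set y z : has_sup (lam_set y z).
Proof.
by split; [exists (h v); exact: lam_set_min | exists (h y) => l []].
Qed.

Lemma lam_ge y z l : lam_set y z l -> l <= lam h y z.
Proof. by move=> yzl; apply: ub_le_sup => //; case: (has_sup_lam_set y z). Qed.

Lemma lam_le y z : lam h y z <= h y /\ lam h y z <= h z.
Proof.
by split; apply: ge_sup; try (by exists (h v); exact: lam_set_min); move=> l [].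
Qed.

Lemma lt_lam y z l : l < lam h y z -> lam_set y z l.
Proof.
move=> ll; have e0 : 0 < lam h y z - l by rewrite subr_gt0.
have [l' yzl' ll'] := sup_adherent e0 (has_sup_lam_set y z).
apply: lam_set_le yzl' _; apply: ltW.
by move: ll'; rewrite -lamE opprB addrCA subrr addr0.
Qed.

Lemma lam_sym y z : lam h y z = lam h z y.
Proof. by rewrite !lamE lam_set_sym. Qed.

Lemma lam_self x : lam h x x = h x.
Proof.
by apply/eqP; rewrite eq_le (lam_le x x).1 /=; apply: lam_ge; split.
Qed.

Lemma lam_ultra y z w : Num.min (lam h y z) (lam h z w) <= lam h y w.
Proof.
apply/ler_addgt0Pr => e e0; rewrite -lerBlDr; apply: lam_ge.
have [m1 m2] : Num.min (lam h y z) (lam h z w) <= lam h y z /\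
               Num.min (lam h y z) (lam h z w) <= lam h z w.
  by rewrite !ge_min !lexx orbT.
by apply: (lam_set_trans (z := z)); apply: lt_lam; lra.
Qed.

Lemma pd_ge0 y z : 0 <= pd h y z.
Proof. by rewrite /pd; have [] := lam_le y z; lra. Qed.

Lemma pd_sym y z : pd h y z = pd h z y.
Proof. by rewrite /pd lam_sym [h y + _]addrC. Qed.

Lemma pd_self x : pd h x x = 0.
Proof. by rewrite /pd lam_self; lra. Qed.

Lemma pd_triangle y z w : pd h y w <= pd h y z + pd h z w.
Proof.
rewrite /pd; have := addr_min_max (lam h y z) (lam h z w).
have max_le : Num.max (lam h y z) (lam h z w) <= h z.
  by rewrite ge_max (lam_le y z).2 (lam_le z w).1.
by have := lam_ultra y z w; lra.
Qed.

Lemma pd_eq0_eq x y z : pd h x y = 0 -> pd h x z = pd h y z.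
Proof.
move=> xy0; have := pd_triangle x y z; have := pd_triangle y x z.
by rewrite (pd_sym y x) xy0; lra.
Qed.

Hypothesis Iloc : locally_connected I.
Hypothesis hcont : continuous h.

Lemma pd_near x e : 0 < e -> \forall y \near x, pd h x y < e.
Proof.
move=> e0; have e4 : 0 < e / 4 by rewrite divr_gt0.
have [V [oV cV Vx Vh]] := Iloc (@cvgr_dist_lt _ _ _ _ _ h (h x) (@hcont x) _ e4).
apply: filterS (open_nbhs_nbhs (conj oV Vx)) => y Vy.
have hV w : V w -> h x - e / 4 < h w < h x + e / 4.
  by move=> /Vh /=; rewrite ltr_norml => /andP [? ?]; apply/andP; split; lra.
have xy : lam_set x y (h x - e / 4).
  apply/lam_setE; split; first lra.
  by apply: connected_component_max Vx _ cV y Vy => w /hV /andP [? _] /=; lra.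
by have := lam_ge xy; have /andP [? ?] := hV y Vy; rewrite /pd; lra.
Qed.

End Levels.

Section Quotient.
Context {R : realType} {I : topologicalType} (h : I -> R).

Definition cls (x : I) : quot h :=
  exist _ [set y | pd h x y = 0] (ex_intro _ x erefl).

Lemma quot_eq (A B : quot h) : proj1_sig A = proj1_sig B -> A = B.
Proof.
by case: A B => A pA [B pB] /= AB; subst B; congr exist; exact: Prop_irrelevance.
Qed.

Lemma qrepP (A : quot h) : proj1_sig A = [set y | pd h (qrep A) y = 0].
Proof. by rewrite /qrep; case: cid. Qed.

Lemma cls_qrep (A : quot h) : cls (qrep A) = A.
Proof. by apply: quot_eq; rewrite (qrepP A). Qed.

Lemma cls_surj (A : quot h) : exists x, A = cls x.
Proof. by exists (qrep A); rewrite cls_qrep. Qed.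

Variable v : I.
Hypothesis Icon : connected [set: I].
Hypothesis hmin : forall x, h v <= h x.

Lemma pd_qrep_cls x : pd h x (qrep (cls x)) = 0.
Proof.
have : [set y | pd h (qrep (cls x)) y = 0] (qrep (cls x)).
  exact: (pd_self Icon hmin).
by rewrite -qrepP.
Qed.

Lemma qdist_cls x y : qdist (cls x) (cls y) = pd h x y.
Proof.
rewrite /qdist -(pd_eq0_eq Icon hmin _ (pd_qrep_cls x)).
rewrite pd_sym -(pd_eq0_eq Icon hmin _ (pd_qrep_cls y)); exact: pd_sym.
Qed.

Lemma cls_eq x y : pd h x y = 0 -> cls x = cls y.
Proof.
move=> xy0; apply: quot_eq; apply/seteqP; split => z /=;
  by rewrite (pd_eq0_eq Icon hmin _ xy0).
Qed.

Lemma qdist_metric : is_metric (@qdist I R h).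
Proof.
move=> a b c.
have [x ->] := cls_surj a; have [y ->] := cls_surj b; have [z ->] := cls_surj c.
rewrite !qdist_cls; split.
- exact: pd_ge0.
- split; first exact: cls_eq.
  by move=> xy; rewrite -qdist_cls xy qdist_cls (pd_self Icon hmin).
- exact: pd_sym.
- exact: pd_triangle.
Qed.

Hypothesis Iloc : locally_connected I.
Hypothesis hcont : continuous h.

Lemma qdist_compact : compact [set: I] -> metric_compact (@qdist I R h).
Proof.
move=> Icomp J U Uopen Ucover.
have Icover : cover_compact [set: I] := compact_cover_compact v Icomp.
have [] := Icover {classic J} setT (fun j => [set x | U j (cls x)]).
- move=> j _; rewrite openE => x /= Ux.
  have [e [e0 eU]] := Uopen j _ Ux.
  by apply: filterS (pd_near Icon hmin Iloc hcont x e0) => y xy; apply: eU;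
    rewrite qdist_cls.
- by move=> x _; have [j Uj] := Ucover (cls x); exists j.
move=> D _ Dcover; exists [set` D].
split; first exact: (@finite_fset {classic J} D).
by move=> q; have [x ->] := cls_surj q; have [j Dj Uj] := Dcover x Logic.I;
  exists j.
Qed.

End Quotient.

Theorem mainTheorem10 (R : realType) (I : topologicalType) (h : I -> R) (v : I) :
  compact [set: I] -> connected [set: I] -> locally_connected I ->
  continuous h -> (forall x, 0 < h x) -> (forall x, h v <= h x) ->
  is_metric (@qdist I R h) /\ metric_compact (@qdist I R h).
Proof.
move=> Icomp Icon Iloc hcont _ hmin.
split; first exact: qdist_metric Icon hmin.
exact: qdist_compact Icon hmin Iloc hcont Icomp.
Qed.
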